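(* For any quantum automaton $\mathcal{A}$ over alphabet $\Sigma$ and any $w\in\Sigma^\omega$, $$f^{\mathrm{ND}}_{\mathcal{A}}(w)=\limsup_{n\to\infty}f^{\mathrm{MO}}_{\mathcal{A}}(w_n).$$
   Context: A quantum automaton is a tuple $\mathcal{A}=(\mathcal{H},|s_0\rangle,\Sigma,\{U_\sigma:\sigma\in\Sigma\},F)$ where $\mathcal{H}$ is a finite-dimensional complex Hilbert space, $|s_0\rangle$ a unit vector, $\Sigma$ a finite alphabet, each $U_\sigma$ unitary, and $F$ a subspace with orthogonal projection $P_F$. For a finite word $x=\sigma_1\cdots\sigma_m$, $U_x=U_{\sigma_m}\cdots U_{\sigma_1}$ and $f^{\mathrm{MO}}_{\mathcal{A}}(x)=\|P_FU_x|s_0\rangle\|^2$. For $w\in\Sigma^\omega$, $w_n$ is its prefix of length $n$, the non-disturbing run is $|s_n\rangle=U_{w_n}|s_0\rangle$, and $f^{\mathrm{ND}}_{\mathcal{A}}(w)=\sup_{|\psi\rangle}\sup_{\{n_i\}}\inf_{i\ge1}|\langle\psi|s_{n_i}\rangle|^2$ over unit $|\psi\rangle\in F$ and strictly increasing sequences $0\le n_1<n_2<\cdots$. *)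

From HB Require Import structures.
From mathcomp Require Import all_boot all_order all_algebra.
From mathcomp Require Import all_classical all_reals.
From mathcomp Require Import topology normedtype sequences.
From mathcomp.real_closed Require Import complex.
Set Implicit Arguments. Unset Strict Implicit. Unset Printing Implicit Defensive.
Import Order.TTheory GRing.Theory Num.Theory.
Local Open Scope ring_scope.
Local Open Scope classical_set_scope.

Section QA.
Variable R : realType.
Local Notation C := R[i].

Definition csqnorm (z : C) : R := complex.Re z ^+ 2 + complex.Im z ^+ 2.

Definition adj (m n : nat) (A : 'M[C]_(m, n)) : 'M[C]_(n, m) :=
  map_mx (@conjc R) A^T.

(* inner product <x|y>, antilinear in the first argument *)
Definition cdot (d : nat) (x y : 'cV[C]_d) : C := (adj x *m y) 0 0.

Definition vsqnorm (d : nat) (x : 'cV[C]_d) : R := \sum_(i < d) csqnorm (x i 0).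

Definition unitary (d : nat) (U : 'M[C]_d) : Prop := adj U *m U = 1%:M.

Definition orth_proj (d : nat) (P : 'M[C]_d) : Prop := adj P = P /\ P *m P = P.

Record qaut (Sigma : finType) := QAut {
  qa_dim : nat;
  qa_s0 : 'cV[C]_qa_dim;
  qa_U : Sigma -> 'M[C]_qa_dim;
  qa_P : 'M[C]_qa_dim  (* orthogonal projection P_F onto the accepting subspace F *)
}.

Definition qaut_wf (Sigma : finType) (A : qaut Sigma) : Prop :=
  vsqnorm (qa_s0 A) = 1 /\ (forall s, unitary (qa_U A s)) /\ orth_proj (qa_P A).

(* U_x for x = s_1 ... s_m is U_{s_m} ... U_{s_1} *)
Definition Uword (Sigma : finType) (A : qaut Sigma) (x : seq Sigma) : 'M[C]_(qa_dim A) :=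
  foldl (fun M s => qa_U A s *m M) 1%:M x.

Definition f_MO (Sigma : finType) (A : qaut Sigma) (x : seq Sigma) : R :=
  vsqnorm (qa_P A *m (Uword A x *m qa_s0 A)).

Definition wprefix (Sigma : Type) (w : nat -> Sigma) (n : nat) : seq Sigma :=
  [seq w i | i <- iota 0 n].

Definition ndrun (Sigma : finType) (A : qaut Sigma) (w : nat -> Sigma) (n : nat)
  : 'cV[C]_(qa_dim A) := Uword A (wprefix w n) *m qa_s0 A.

Definition f_ND (Sigma : finType) (A : qaut Sigma) (w : nat -> Sigma) : R :=
  sup [set r : R | exists (psi : 'cV[C]_(qa_dim A)) (ns : nat -> nat),
        [/\ vsqnorm psi = 1, qa_P A *m psi = psi,
            (forall i, (ns i < ns i.+1)%N) &
            r = inf [set csqnorm (cdot psi (ndrun A w (ns i))) | i in [set: nat]]]].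

End QA.

From HB Require Import structures.
From mathcomp Require Import all_boot all_order all_algebra.
From mathcomp Require Import all_classical all_reals.
From mathcomp Require Import topology normedtype sequences.
From mathcomp.real_closed Require Import complex.
From mathcomp Require Import ring lra.
Set Implicit Arguments. Unset Strict Implicit. Unset Printing Implicit Defensive.
Import Order.TTheory GRing.Theory Num.Theory.
Import numFieldNormedType.Exports.
Local Open Scope ring_scope.
Local Open Scope classical_set_scope.

(* Write s_n for the non-disturbing run and P for the projection onto F, so
   that f^MO(w_n) = ||P s_n||^2, every s_n being a unit vector.  For a unit
   psi in F, |<psi|s_n>|^2 = |<psi|P s_n>|^2 <= ||P s_n||^2 by Cauchy-Schwarz,
   and since n_i >= i the infimum along (n_i) lies below every tail supremum:
   f^ND <= limsup.  Conversely, take a subsequence along which ||P s_n||^2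
   tends to L = limsup and, by compactness of the unit sphere, s_n tends to
   some l.  Then ||P l||^2 = L; if L > 0, psi = P l / ||P l|| lies in F and
   |<psi|s_n>|^2 tends to |<psi|l>|^2 = L along the subsequence, so its tails
   give values of f^ND arbitrarily close to L. *)

Section InnerProduct.
Variable R : realType.
Local Notation C := R[i].
Local Open Scope complex_scope.

Lemma csqnormE (z : C) : (csqnorm z)%:C = z * conjc z.
Proof.
case: z => a b; apply/eqP; rewrite eq_complex /csqnorm /=.
by apply/andP; split; apply/eqP; ring.
Qed.

Lemma csqnorm_ge0 (z : C) : 0 <= csqnorm z.
Proof. by rewrite addr_ge0 ?sqr_ge0. Qed.

Lemma csqnorm_real (a : R) : csqnorm a%:C = a ^+ 2.
Proof. by rewrite /csqnorm /= expr0n addr0. Qed.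

Lemma adjM m n p (A : 'M[C]_(m, n)) (B : 'M[C]_(n, p)) :
  adj (A *m B) = adj B *m adj A.
Proof. by rewrite /adj trmx_mul map_mxM. Qed.

Lemma adjK m n (A : 'M[C]_(m, n)) : adj (adj A) = A.
Proof. by apply/matrixP => i j; rewrite !mxE conjcK. Qed.

Lemma adj1 n : adj (1%:M : 'M[C]_n) = 1%:M.
Proof. by apply/matrixP => i j; rewrite !mxE eq_sym conjc_nat. Qed.

Variable d : nat.
Implicit Types (x y psi : 'cV[C]_d) (M U : 'M[C]_d).

Lemma cdotE x y : cdot x y = \sum_i conjc (x i 0) * y i 0.
Proof. by rewrite /cdot mxE; apply: eq_bigr => i _; rewrite !mxE. Qed.

Lemma vsqnormE x : (vsqnorm x)%:C = cdot x x.
Proof.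
rewrite cdotE rmorph_sum; apply: eq_bigr => i _.
by rewrite mulrC -csqnormE.
Qed.

Lemma vsqnorm_ge0 x : 0 <= vsqnorm x.
Proof. by rewrite sumr_ge0 // => i _; exact: csqnorm_ge0. Qed.

Lemma csqnorm_le_vsqnorm x i : csqnorm (x i 0) <= vsqnorm x.
Proof.
rewrite /vsqnorm (bigD1 i) //= lerDl.
by rewrite sumr_ge0 // => j _; exact: csqnorm_ge0.
Qed.

Lemma cdotDl x y z : cdot (x + y) z = cdot x z + cdot y z.
Proof.
by rewrite !cdotE -big_split; apply: eq_bigr => i _; rewrite mxE rmorphD mulrDl.
Qed.

Lemma cdotDr x y z : cdot z (x + y) = cdot z x + cdot z y.
Proof. by rewrite !cdotE -big_split; apply: eq_bigr => i _; rewrite mxE mulrDr. Qed.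

Lemma cdotNl x z : cdot (- x) z = - cdot x z.
Proof. by rewrite !cdotE -sumrN; apply: eq_bigr => i _; rewrite mxE rmorphN mulNr. Qed.

Lemma cdotNr x z : cdot z (- x) = - cdot z x.
Proof. by rewrite !cdotE -sumrN; apply: eq_bigr => i _; rewrite mxE mulrN. Qed.

Lemma cdotZl a x z : cdot (a *: x) z = conjc a * cdot x z.
Proof.
by rewrite !cdotE mulr_sumr; apply: eq_bigr => i _; rewrite mxE rmorphM mulrA.
Qed.

Lemma cdotZr a x z : cdot z (a *: x) = a * cdot z x.
Proof. by rewrite !cdotE mulr_sumr; apply: eq_bigr => i _; rewrite mxE mulrCA. Qed.

Lemma cdotC x y : cdot y x = conjc (cdot x y).
Proof.
rewrite !cdotE rmorph_sum; apply: eq_bigr => i _.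
by rewrite rmorphM /= conjcK mulrC.
Qed.

Lemma cdot_adj M x y : cdot x (M *m y) = cdot (adj M *m x) y.
Proof. by rewrite /cdot adjM adjK mulmxA. Qed.

Lemma vsqnormZ a x : vsqnorm (a *: x) = csqnorm a * vsqnorm x.
Proof.
apply: complexI; rewrite rmorphM /= !vsqnormE cdotZl cdotZr csqnormE.
by rewrite mulrCA mulrA.
Qed.

Lemma vsqnorm_sub_cdot psi y : vsqnorm psi = 1 ->
  vsqnorm (y - cdot psi y *: psi) = vsqnorm y - csqnorm (cdot psi y).
Proof.
move=> psi1; have psipsi : cdot psi psi = 1 by rewrite -vsqnormE psi1.
apply: complexI; rewrite rmorphB /= !vsqnormE csqnormE.
rewrite cdotDl !cdotDr !cdotNl !cdotNr !cdotZl !cdotZr psipsi.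
by rewrite [cdot y psi]cdotC; ring.
Qed.

Lemma csqnorm_cdot_le psi y : vsqnorm psi = 1 ->
  csqnorm (cdot psi y) <= vsqnorm y.
Proof. by move=> psi1; rewrite -subr_ge0 -vsqnorm_sub_cdot ?vsqnorm_ge0. Qed.

Lemma unitary1 : unitary (1%:M : 'M[C]_d).
Proof. by rewrite /unitary adj1 mul1mx. Qed.

Lemma unitaryM U V : unitary U -> unitary V -> unitary (U *m V).
Proof.
rewrite /unitary adjM => UU VV.
by rewrite -mulmxA (mulmxA (adj U)) UU mul1mx.
Qed.

Lemma unitary_vsqnorm U x : unitary U -> vsqnorm (U *m x) = vsqnorm x.
Proof. by move=> UU; apply: complexI; rewrite !vsqnormE cdot_adj mulmxA UU mul1mx. Qed.

Section OrthogonalProjection.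
Variable P : 'M[C]_d.
Hypothesis P_proj : orth_proj P.

Lemma cdot_projl x y : cdot (P *m x) y = cdot x (P *m y).
Proof. by case: P_proj => P_adj _; rewrite cdot_adj P_adj. Qed.

Lemma vsqnorm_proj x : (vsqnorm (P *m x))%:C = cdot x (P *m x).
Proof. by case: P_proj => _ PP; rewrite vsqnormE cdot_projl mulmxA PP. Qed.

Lemma vsqnorm_proj_le x : vsqnorm (P *m x) <= vsqnorm x.
Proof.
suff -> : vsqnorm x = vsqnorm (P *m x) + vsqnorm (x - P *m x).
  by rewrite lerDl vsqnorm_ge0.
have PxPx : cdot (P *m x) (P *m x) = cdot x (P *m x).
  by rewrite -vsqnormE vsqnorm_proj.
apply: complexI; rewrite rmorphD /= !vsqnormE cdotDl !cdotDr !cdotNl !cdotNr.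
by rewrite PxPx cdot_projl; ring.
Qed.

Lemma csqnorm_cdot_proj_le psi y : vsqnorm psi = 1 -> P *m psi = psi ->
  csqnorm (cdot psi y) <= vsqnorm (P *m y).
Proof.
move=> psi1 Ppsi; rewrite -[in cdot psi y]Ppsi cdot_projl.
exact: csqnorm_cdot_le.
Qed.

Lemma exists_unit_cdot_proj l : 0 < vsqnorm (P *m l) ->
  exists psi, [/\ vsqnorm psi = 1, P *m psi = psi &
                  csqnorm (cdot psi l) = vsqnorm (P *m l)].
Proof.
move=> Pl_gt0; set q := Num.sqrt (vsqnorm (P *m l)).
have q_gt0 : 0 < q by rewrite sqrtr_gt0.
have q2 : q ^+ 2 = vsqnorm (P *m l) by rewrite sqr_sqrtr // ltW.
have q_neq0 : q != 0 by rewrite gt_eqF.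
exists (q^-1%:C *: (P *m l)); split.
- by rewrite vsqnormZ csqnorm_real -q2 exprVn mulVf // expf_neq0.
- by case: P_proj => _ PP; rewrite scalemxAr mulmxA PP.
- rewrite cdotZl conjc_real cdot_projl -vsqnorm_proj -q2 -rmorphM csqnorm_real.
  by rewrite expr2 mulKf.
Qed.

End OrthogonalProjection.
End InnerProduct.

Lemma leq_increasing_seq (f : nat -> nat) : increasing_seq f -> forall n, (n <= f n)%N.
Proof.
move=> /increasing_seqP f_incr; elim=> // n IHn.
exact: leq_ltn_trans IHn (f_incr n).
Qed.

Lemma cvg_subseq (T : topologicalType) (u : nat -> T) (f : nat -> nat) (l : T) :
  increasing_seq f -> u @ \oo --> l -> (u \o f) @ \oo --> l.
Proof.
move=> f_incr; apply: cvg_comp => A [N _ NA]; exists N => // n /= Nn.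
exact/NA/(leq_trans Nn)/leq_increasing_seq.
Qed.

Section RealSequences.
Variable R : realType.
Implicit Types (u v : R^nat) (f : nat -> nat).

Lemma bounded_fun_le u M : (forall n, `|u n| <= M) -> bounded_fun u.
Proof.
move=> u_le; apply: (@sub_boundedl _ _ _ _ (fun=> M)); last exact: bounded_cst.
by move=> n _; exact: le_trans (u_le n) (ler_norm M).
Qed.

Lemma limn_sup_ge u a : bounded_fun u -> (forall n, a <= u n) -> a <= limn_sup u.
Proof.
move=> u_bnd a_le; rewrite limn_supE //.
apply: lb_le_inf; first by exists (sups u 0), 0.
move=> _ [n _ <-]; apply: le_trans (a_le n) _.
apply: ub_le_sup; first exact/has_ubound_sdrop/bounded_fun_has_ubound.
by exists n => /=.
Qed.

Lemma cvg_limn_sup_subseq u : bounded_fun u ->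
  exists2 f, increasing_seq f & u \o f @ \oo --> limn_sup u.
Proof.
move=> u_bnd; apply/cluster_eventually_cvg/cluster_eventuallyP => e n e_gt0.
set L := limn_sup u.
have sups_ge n' : L <= sups u n'.
  rewrite /L limn_supE //.
  by apply: ge_inf; [exact: bounded_fun_has_lbound_sups | exists n'].
have sups_cvg : sups u @ \oo --> L.
  rewrite /L limn_supE //; apply: cvg_sups_inf;
    [exact: bounded_fun_has_ubound | exact: bounded_fun_has_lbound].
have [N _ supsN] := @cvgr_lt _ _ _ _ _ _ sups_cvg (L + e) ltac:(by rewrite ltrDl).
set m := maxn n N; have supsm_lt := supsN m (leq_maxr n N).
have u_sup : has_sup (sdrop u m).
  by split; [exists (u m), m => /= | exact/has_ubound_sdrop/bounded_fun_has_ubound].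
have [_ [p /= mp <-] up_gt] := sup_adherent e_gt0 u_sup.
exists p; first exact: leq_trans (leq_maxl n N) mp.
have up_le : u p <= sups u m by apply: ub_le_sup; [case: u_sup | exists p].
have {}up_gt : sups u m - e < u p := up_gt.
have := sups_ge m; rewrite /= in supsm_lt => L_le.
by rewrite ler_norml; apply/andP; split; lra.
Qed.

Lemma inf_subseq_le_limn_sup u v f : bounded_fun u ->
  (forall n, 0 <= v n <= u n) -> increasing_seq f ->
  inf (range (v \o f)) <= limn_sup u.
Proof.
move=> u_bnd v_bnd f_incr; rewrite limn_supE //.
apply: lb_le_inf; first by exists (sups u 0), 0.
move=> _ [n _ <-].
have v_lb : has_lbound (range (v \o f)).
  by exists 0 => _ [k _ <-]; case/andP: (v_bnd (f k)).
apply: le_trans (ge_inf v_lb (ex_intro2 _ _ n I erefl)) _.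
apply: le_trans (_ : u (f n) <= _); first by case/andP: (v_bnd (f n)).
apply: ub_le_sup; first exact/has_ubound_sdrop/bounded_fun_has_ubound.
by exists (f n) => //=; exact: leq_increasing_seq.
Qed.

Lemma cvg_tail_inf_ge v a e : v @ \oo --> a -> 0 < e ->
  exists K, a - e <= inf (range (fun i => v (i + K)%N)).
Proof.
move=> va e_gt0.
have [K _ vK] := @cvgr_ge _ _ _ _ _ _ va (a - e) ltac:(by rewrite gtrBl).
exists K; apply: lb_le_inf; first by exists (v (0 + K)%N), 0.
by move=> _ [i _ <-]; apply: vK; rewrite /= leq_addl.
Qed.

Lemma sup_eq_approx (S : set R) (L : R) : 0 <= L ->
  (forall r, S r -> 0 <= r <= L) ->
  (0 < L -> forall e, 0 < e -> exists2 r, S r & L - e <= r) ->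
  sup S = L.
Proof.
move=> L_ge0 S_bnd S_approx; have [L0 | L_neq0] := eqVneq L 0.
  have [-> | /set0P[r Sr]] := eqVneq S set0; first by rewrite sup0.
  suff -> : S = [set 0] by rewrite sup1.
  apply/seteqP; split => [x /S_bnd | _ ->]; first by rewrite L0 -eq_le => /eqP.
  by have := S_bnd r Sr; rewrite L0 -eq_le => /eqP ->.
have L_gt0 : 0 < L by rewrite lt_def L_neq0.
have S_ub : ubound S L by move=> r /S_bnd /andP[].
apply/eqP; rewrite eq_le; apply/andP; split.
  have [r Sr _] := S_approx L_gt0 L L_gt0.
  by apply: ge_sup => //; exists r.
apply/ler_addgt0Pr => e e_gt0; have [r Sr Lr] := S_approx L_gt0 e e_gt0.
have := ub_le_sup (ex_intro _ L S_ub) Sr; lra.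
Qed.

Lemma bolzano_weierstrass_seq (I : eqType) (F : I -> R^nat) (M : R) (s : seq I) :
  (forall j n, `|F j n| <= M) ->
  exists2 f, increasing_seq f & forall j, j \in s -> cvgn (F j \o f).
Proof.
move=> F_bnd; elim: s => [|j s [f f_incr Ff_cvg]]; first by exists id.
have Fjf_bnd := bounded_fun_le (fun n => F_bnd j (f n)).
have [g g_incr Fjfg_cvg] := bolzano_weierstrass Fjf_bnd.
exists (f \o g); first by move=> m n /=; rewrite f_incr -leEnat g_incr.
move=> k; rewrite inE => /predU1P[-> // | /Ff_cvg/cvg_ex[l Fkf_l]].
by apply/cvg_ex; exists l; exact: cvg_subseq Fkf_l.
Qed.

End RealSequences.

Section ComplexConvergence.
Variable R : realType.
Local Notation C := R[i].
Local Open Scope complex_scope.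

(* [R[i]] carries no topology, so convergence of complex sequences (and of
   vectors, entrywise) is convergence of the real and imaginary parts. *)
Definition ccvg (z : nat -> C) (a : C) :=
  (fun n => complex.Re (z n)) @ \oo --> complex.Re a /\
  (fun n => complex.Im (z n)) @ \oo --> complex.Im a.

Lemma ccvg_cst (a : C) : ccvg (fun=> a) a.
Proof. by split; exact: cvg_cst. Qed.

Let ReD (u v : C) : complex.Re (u + v) = complex.Re u + complex.Re v.
Proof. by case: u v => [? ?] [? ?]. Qed.

Let ImD (u v : C) : complex.Im (u + v) = complex.Im u + complex.Im v.
Proof. by case: u v => [? ?] [? ?]. Qed.

Let ReM (u v : C) :
  complex.Re (u * v) = complex.Re u * complex.Re v - complex.Im u * complex.Im v.
Proof. by case: u v => [? ?] [? ?]. Qed.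

Let ImM (u v : C) :
  complex.Im (u * v) = complex.Re u * complex.Im v + complex.Im u * complex.Re v.
Proof. by case: u v => [? ?] [? ?] /=; rewrite addrC. Qed.

Let ReJ (u : C) : complex.Re (conjc u) = complex.Re u.
Proof. by case: u. Qed.

Let ImJ (u : C) : complex.Im (conjc u) = - complex.Im u.
Proof. by case: u. Qed.

Lemma ccvgD z y a b : ccvg z a -> ccvg y b -> ccvg (fun n => z n + y n) (a + b).
Proof.
case=> z1 z2 [y1 y2]; rewrite /ccvg ReD ImD.
by split; [under eq_fun do rewrite ReD | under eq_fun do rewrite ImD]; exact: cvgD.
Qed.

Lemma ccvgM z y a b : ccvg z a -> ccvg y b -> ccvg (fun n => z n * y n) (a * b).
Proof.
case=> z1 z2 [y1 y2]; rewrite /ccvg ReM ImM.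
split; [under eq_fun do rewrite ReM | under eq_fun do rewrite ImM].
- by apply: cvgB; exact: cvgM.
- by apply: cvgD; exact: cvgM.
Qed.

Lemma ccvgJ z a : ccvg z a -> ccvg (fun n => conjc (z n)) (conjc a).
Proof.
case=> z1 z2; rewrite /ccvg ReJ ImJ.
split; [by under eq_fun do rewrite ReJ | under eq_fun do rewrite ImJ].
exact: cvgN.
Qed.

Lemma ccvg_sum (I : Type) (s : seq I) (F : I -> nat -> C) (l : I -> C) :
  (forall i, ccvg (F i) (l i)) ->
  ccvg (fun n => \sum_(i <- s) F i n) (\sum_(i <- s) l i).
Proof.
move=> Fl; elim: s => [|i s IHs].
  by rewrite big_nil; under eq_fun do rewrite big_nil; exact: ccvg_cst.
by rewrite big_cons; under eq_fun do rewrite big_cons; exact: ccvgD.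
Qed.

Lemma ccvg_csqnorm z a : ccvg z a -> (fun n => csqnorm (z n)) @ \oo --> csqnorm a.
Proof. by case=> z1 z2; apply: cvgD; apply: cvgM. Qed.

Variable d : nat.

Definition vcvg (x : nat -> 'cV[C]_d) (l : 'cV[C]_d) :=
  forall i, ccvg (fun n => x n i 0) (l i 0).

Lemma vcvg_cst (l : 'cV[C]_d) : vcvg (fun=> l) l.
Proof. by move=> i; exact: ccvg_cst. Qed.

Lemma vcvg_mulmx (M : 'M[C]_d) x l : vcvg x l -> vcvg (fun n => M *m x n) (M *m l).
Proof.
move=> xl i; rewrite mxE; under eq_fun do rewrite mxE.
by apply: ccvg_sum => j; apply: ccvgM; [exact: ccvg_cst | exact: xl].
Qed.

Lemma vcvg_cdot x y a b : vcvg x a -> vcvg y b ->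
  ccvg (fun n => cdot (x n) (y n)) (cdot a b).
Proof.
move=> xa yb; rewrite cdotE; under eq_fun do rewrite cdotE.
by apply: ccvg_sum => j; apply: ccvgM; [apply: ccvgJ; exact: xa | exact: yb].
Qed.

Lemma vcvg_vsqnorm x l : vcvg x l -> (fun n => vsqnorm (x n)) @ \oo --> vsqnorm l.
Proof.
move=> xl; have [+ _] := vcvg_cdot xl xl.
by rewrite -vsqnormE; under eq_fun do rewrite -vsqnormE.
Qed.

Lemma bolzano_weierstrass_cV (x : nat -> 'cV[C]_d) (M : R) :
  (forall n, vsqnorm (x n) <= M) ->
  exists2 f, increasing_seq f & exists l, vcvg (x \o f) l.
Proof.
move=> x_bnd.
pose F (p : 'I_d * bool) n :=
  if p.2 then complex.Im (x n p.1 0) else complex.Re (x n p.1 0).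
have F_bnd p n : `|F p n| <= 1 + M.
  have := le_trans (csqnorm_le_vsqnorm (x n) p.1) (x_bnd n).
  by rewrite /F /csqnorm ler_norml; case: p.2 => ?; apply/andP; split; nra.
have [f f_incr Ff_cvg] := bolzano_weierstrass_seq (index_enum _) F_bnd.
exists f => //; exists (\col_i (limn (F (i, false) \o f) +i* limn (F (i, true) \o f))).
by move=> i; rewrite mxE; split; apply: Ff_cvg; exact: mem_index_enum.
Qed.

End ComplexConvergence.

Section Automaton.
Variables (R : realType) (Sigma : finType) (A : qaut R Sigma) (w : nat -> Sigma).
Hypothesis A_wf : qaut_wf A.

Let s0_unit : vsqnorm (qa_s0 A) = 1 := proj1 A_wf.
Let U_unitary s : unitary (qa_U A s) := proj1 (proj2 A_wf) s.
Let P_proj : orth_proj (qa_P A) := proj2 (proj2 A_wf).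

Lemma unitary_Uword x : unitary (Uword A x).
Proof.
suff Ugen M : unitary M -> unitary (foldl (fun M s => qa_U A s *m M) M x).
  exact/Ugen/unitary1.
by elim: x M => //= s x IHx M M_unitary; exact/IHx/unitaryM.
Qed.

Lemma ndrun_unit n : vsqnorm (ndrun A w n) = 1.
Proof. by rewrite /ndrun unitary_vsqnorm //; exact: unitary_Uword. Qed.

Lemma f_MO_prefix_bounds n : 0 <= f_MO A (wprefix w n) <= 1.
Proof.
by rewrite vsqnorm_ge0 -(ndrun_unit n) vsqnorm_proj_le.
Qed.

Lemma f_MO_prefix_bounded : bounded_fun (fun n => f_MO A (wprefix w n)).
Proof.
apply: (@bounded_fun_le _ _ 1) => n.
by have /andP[u_ge0 u_le1] := f_MO_prefix_bounds n; rewrite ger0_norm.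
Qed.

Lemma nd_value_le_limn_sup psi (ns : nat -> nat) :
  vsqnorm psi = 1 -> qa_P A *m psi = psi -> (forall i, (ns i < ns i.+1)%N) ->
  inf [set csqnorm (cdot psi (ndrun A w (ns i))) | i in [set: nat]] <=
  limn_sup (fun n => f_MO A (wprefix w n)).
Proof.
move=> psi1 Ppsi ns_incr.
apply: (inf_subseq_le_limn_sup (v := fun n => csqnorm (cdot psi (ndrun A w n))))
  f_MO_prefix_bounded _ (iffLR (increasing_seqP ns) ns_incr) => n.
by rewrite csqnorm_ge0 csqnorm_cdot_proj_le.
Qed.

Lemma nd_value_approx e : 0 < limn_sup (fun n => f_MO A (wprefix w n)) -> 0 < e ->
  exists psi (ns : nat -> nat),
    [/\ vsqnorm psi = 1, qa_P A *m psi = psi, (forall i, (ns i < ns i.+1)%N) &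
        limn_sup (fun n => f_MO A (wprefix w n)) - e <=
        inf [set csqnorm (cdot psi (ndrun A w (ns i))) | i in [set: nat]]].
Proof.
set L := limn_sup _ => L_gt0 e_gt0.
have [f f_incr uf_L] := cvg_limn_sup_subseq f_MO_prefix_bounded.
have [g g_incr [l xfg_l]] : exists2 g, increasing_seq g &
    exists l, vcvg (ndrun A w \o f \o g) l.
  by apply: (bolzano_weierstrass_cV (M := 1)) => n; rewrite /= ndrun_unit.
have fg_incr : increasing_seq (f \o g) by move=> m n /=; rewrite f_incr -leEnat g_incr.
have Pl_L : vsqnorm (qa_P A *m l) = L.
  have := vcvg_vsqnorm (vcvg_mulmx (qa_P A) xfg_l).
  by move/(@cvg_unique _ (@Rhausdorff R)); apply; exact: cvg_subseq g_incr uf_L.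
have [psi [psi1 Ppsi psil]] := exists_unit_cdot_proj P_proj (l := l)
  ltac:(by rewrite Pl_L).
have := ccvg_csqnorm (vcvg_cdot (vcvg_cst psi) xfg_l).
rewrite psil Pl_L => cdot_cvg; have [K LK] := cvg_tail_inf_ge cdot_cvg e_gt0.
exists psi, (fun i => f (g (i + K)%N)); split => // i.
by move/increasing_seqP: fg_incr; apply; rewrite addSn.
Qed.

End Automaton.

Theorem proposition2 (R : realType) (Sigma : finType) (A : qaut R Sigma)
  (w : nat -> Sigma) :
  qaut_wf A ->
  f_ND A w = limn_sup (fun n => f_MO A (wprefix w n)).
Proof.
move=> A_wf; apply: sup_eq_approx.
- apply: limn_sup_ge; first exact: f_MO_prefix_bounded.
  by move=> n; case/andP: (f_MO_prefix_bounds w A_wf n).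
- move=> _ [psi [ns [psi1 Ppsi ns_incr ->]]].
  rewrite nd_value_le_limn_sup // andbT.
  apply: lb_le_inf; first by exists (csqnorm (cdot psi (ndrun A w (ns 0)))), 0.
  by move=> _ [i _ <-]; exact: csqnorm_ge0.
- move=> L_gt0 e e_gt0.
  have [psi [ns [psi1 Ppsi ns_incr Le]]] := nd_value_approx A_wf L_gt0 e_gt0.
  by exists (inf [set csqnorm (cdot psi (ndrun A w (ns i))) | i in [set: nat]]);
    first by exists psi, ns.
Qed.
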